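(* For every integer $d\ge 30$, $N_d>\frac{\sqrt d}{2}$; that is, there exists a well-rounded unimodular lattice in $\mathbb{R}^d$ whose covering radius is strictly larger than $\sqrt d/2$ (the covering radius of $\mathbb{Z}^d$).
   Context: A lattice $\Lambda\subset\mathbb{R}^d$ is \emph{well-rounded} if its shortest nonzero vectors (with respect to the Euclidean norm) span $\mathbb{R}^d$, and \emph{unimodular} if its covolume equals $1$. The \emph{covering radius} $r(\Lambda)$ of a lattice $\Lambda\subset\mathbb{R}^d$ is the least $r\ge 0$ such that $\mathbb{R}^d=\Lambda+B_r$, where $B_r$ is the closed Euclidean ball of radius $r$ centered at $0$. $N_d$ denotes the supremum of $r(\Lambda)$ over all well-rounded unimodular lattices $\Lambda\subset\mathbb{R}^d$. *)

From Stdlib Require Import Reals ZArith.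
From mathcomp Require Import ssreflect ssrfun ssrbool eqtype ssrnat seq choice
  fintype finfun bigop fingroup perm.

Set Implicit Arguments. Unset Strict Implicit. Unset Printing Implicit Defensive.

Local Open Scope R_scope.

Definition vec (d : nat) := 'I_d -> R.

Definition sumR (d : nat) (f : 'I_d -> R) : R := \big[Rplus/0]_(i < d) f i.

Definition dotR (d : nat) (x y : vec d) : R := sumR (fun i => x i * y i).
Definition normR (d : nat) (x : vec d) : R := sqrt (dotR x x).
Definition subv (d : nat) (x y : vec d) : vec d := fun i => x i - y i.

Definition lattice_pt (d : nat) (B : 'I_d -> vec d) (z : 'I_d -> Z) : vec d :=
  fun i => sumR (fun j => IZR (z j) * B j i).

Definition in_lattice (d : nat) (B : 'I_d -> vec d) (v : vec d) : Prop :=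
  exists z : 'I_d -> Z, forall i, v i = lattice_pt B z i.

Definition detR (d : nat) (M : 'I_d -> 'I_d -> R) : R :=
  \big[Rplus/0]_(s : 'S_d)
     ((-1) ^ (nat_of_bool (odd_perm s)) * \big[Rmult/1]_(i < d) M i (s i)).

Definition covolume (d : nat) (B : 'I_d -> vec d) : R := Rabs (detR B).
Definition unimodular (d : nat) (B : 'I_d -> vec d) : Prop := covolume B = 1.

Definition nonzero (d : nat) (v : vec d) : Prop := exists i, v i <> 0.

Definition shortest_vector (d : nat) (B : 'I_d -> vec d) (v : vec d) : Prop :=
  in_lattice B v /\ nonzero v /\
  forall w, in_lattice B w -> nonzero w -> normR v <= normR w.

Definition spans (d : nat) (S : vec d -> Prop) : Prop :=
  forall x : vec d, exists l : seq (R * vec d),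
    (forall p, List.In p l -> S p.2) /\
    forall i, x i = \big[Rplus/0]_(p <- l) (p.1 * p.2 i).

Definition well_rounded (d : nat) (B : 'I_d -> vec d) : Prop :=
  spans (shortest_vector B).

Definition covers (d : nat) (B : 'I_d -> vec d) (r : R) : Prop :=
  forall x : vec d, exists v, in_lattice B v /\ normR (subv x v) <= r.

Definition is_covering_radius (d : nat) (B : 'I_d -> vec d) (r : R) : Prop :=
  0 <= r /\ covers B r /\ forall r', 0 <= r' -> covers B r' -> r <= r'.

From Pilot Require Import Defs.
From Stdlib Require Import Reals ZArith Lra Lia Psatz.
From mathcomp Require Import ssreflect ssrfun ssrbool eqtype ssrnat seq div
  fintype bigop fingroup perm order ssralg matrix.
From mathcomp Require Import Rstruct zify.

(* Take q = N/4, k = 2q and the lattice s (D_k / sqrt 2 (+) Z^(N-k)) with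
   s^N = 2^(q-1), so that its covolume s^N 2^(1-q) is 1.  Both summands have
   minimum 1 and are spanned by their minimal vectors, so the lattice is well
   rounded.  For k >= 4 its covering radius is s sqrt(k/8 + (N-k)/4): the deep
   hole (s/2) (1/sqrt 2, ..., 1/sqrt 2, 1, ..., 1) is that far from the lattice,
   and rounding with a parity correction on D_k is never farther.  Finally
   s^2 (N - q) > N as soon as N >= 30, i.e. 4^(q-1) (N - q)^N > N^N. *)

Set Implicit Arguments. Unset Strict Implicit. Unset Printing Implicit Defensive.
Import Order.TTheory.
Local Open Scope R_scope.

Definition is_int (x : R) : Prop := exists z : Z, x = IZR z.
Definition is_even (x : R) : Prop := exists m, is_int m /\ x = 2 * m.

Lemma is_int0 : is_int 0. Proof. by exists 0%Z. Qed.
Lemma is_int1 : is_int 1. Proof. by exists 1%Z. Qed.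
Lemma is_intN1 : is_int (-1). Proof. by exists (-1)%Z. Qed.

Lemma is_intD x y : is_int x -> is_int y -> is_int (x + y).
Proof. by move=> [a ->] [b ->]; exists (a + b)%Z; rewrite plus_IZR. Qed.

Lemma is_intM x y : is_int x -> is_int y -> is_int (x * y).
Proof. by move=> [a ->] [b ->]; exists (a * b)%Z; rewrite mult_IZR. Qed.

Lemma is_intN x : is_int x -> is_int (- x).
Proof. by move=> [a ->]; exists (- a)%Z; rewrite opp_IZR. Qed.

Lemma is_int_sum I (r : seq I) (P : pred I) F :
  (forall i, P i -> is_int (F i)) -> is_int (\big[Rplus/0]_(i <- r | P i) F i).
Proof. by move=> H; apply: big_ind => //; [exact: is_int0 | exact: is_intD]. Qed.

Lemma is_int_ge1 x : is_int x -> 0 < x -> 1 <= x.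
Proof. by move=> [z ->] /lt_0_IZR h; apply: IZR_le; lia. Qed.

Lemma is_int_mul_pred_half x : is_int x -> is_int (x * (x - 1) / 2).
Proof.
move=> [z ->]; case: (Zeven_odd_dec z) => [/Zeven_ex [m ->]|/Zodd_ex [m ->]].
  by exists (m * (2 * m - 1))%Z; rewrite !(mult_IZR, minus_IZR) /=; field.
by exists (m * (2 * m + 1))%Z; rewrite !(mult_IZR, plus_IZR) /=; field.
Qed.

Lemma is_int_mul_pred_ge0 x : is_int x -> 0 <= x * (x - 1).
Proof.
move=> [z ->]; case: (Z.le_gt_cases z 0) => [/IZR_le | hz]; first nra.
have /IZR_le : (1 <= z)%Z by lia.
nra.
Qed.

Lemma is_int_parity x : is_int x -> is_even x \/ is_even (x + 1) /\ is_even (x - 1).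
Proof.
move=> [z ->]; case: (Zeven_odd_dec z) => [/Zeven_ex [u ->]|/Zodd_ex [u ->]].
  by left; exists (IZR u); split; [exists u | rewrite mult_IZR].
right; rewrite plus_IZR mult_IZR; split.
  by exists (IZR u + 1); split; [exists (u + 1)%Z; rewrite plus_IZR | ring].
by exists (IZR u); split; [exists u | ring].
Qed.

(* An explicit integer witness, to avoid appealing to a choice principle. *)
Definition Z_of_int (x : R) : Z := (up x - 1)%Z.

Lemma Z_of_intK x : is_int x -> IZR (Z_of_int x) = x.
Proof.
move=> [z ->]; rewrite /Z_of_int minus_IZR.
have <- : (z + 1)%Z = up (IZR z) by apply: tech_up; rewrite plus_IZR; lra.
by rewrite plus_IZR; ring.
Qed.

Definition round_int (x : R) : R := IZR (up (x + / 2)) - 1.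

Lemma is_int_round x : is_int (round_int x).
Proof. by exists (up (x + / 2) - 1)%Z; rewrite /round_int minus_IZR. Qed.

Lemma round_int_err x : - / 2 <= x - round_int x < / 2.
Proof. by rewrite /round_int; case: (archimed (x + / 2)) => h1 h2; lra. Qed.

Lemma round_int_flip x : exists d, (d = 1 \/ d = -1) /\
  (x - (round_int x + d)) * (x - (round_int x + d)) =
  (x - round_int x) * (x - round_int x) + 1 - 2 * Rabs (x - round_int x).
Proof.
case: (Rle_dec (round_int x) x) => h.
  by exists 1; split; [left | rewrite Rabs_pos_eq; [ring | lra]].
by exists (-1); split; [right | rewrite Rabs_left; [ring | lra]].
Qed.

(* Re-rounding the coordinate with the largest error e to the other side costs
   1 - 2e, which keeps the total below k/4 as soon as k >= 4. *)
Lemma flip_err_le (k : nat) (S e : R) : (4 <= k)%N -> 0 <= e <= / 2 ->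
  S <= INR k * (e * e) -> S + 1 - 2 * e <= INR k / 4.
Proof.
move=> k_ge4 he hS; have k4R : 4 <= INR k by have := le_INR 4 k ltac:(lia); rewrite /=; lra.
have : 0 <= (1 - 2 * e) * (INR k * (1 + 2 * e) / 4 - 1) by apply: Rmult_le_pos; nra.
nra.
Qed.

Lemma sum_ge0 I (r : seq I) (P : pred I) F :
  (forall i, P i -> 0 <= F i) -> 0 <= \big[Rplus/0]_(i <- r | P i) F i.
Proof. by move=> H; apply: big_ind => //; [lra | move=> *; lra]. Qed.

Lemma sum_mull I (r : seq I) (P : pred I) a F :
  \big[Rplus/0]_(i <- r | P i) (a * F i) = a * \big[Rplus/0]_(i <- r | P i) F i.
Proof.
elim: r => [|x r IH]; rewrite ?big_nil ?big_cons; first ring.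
by case: (P x); rewrite IH; ring.
Qed.

Lemma prod_const (N : nat) (a : R) : \big[Rmult/1]_(i < N) a = a ^ N.
Proof. by elim: N => [|N IH]; rewrite ?big_ord0 // big_ord_recr /= IH; ring. Qed.

Lemma prod_if_lt (N k : nat) (a b : R) :
  \big[Rmult/1]_(i < N) (if (i < k)%N then a else b) = a ^ minn k N * b ^ (N - k).
Proof.
elim: N => [|N IH]; first by rewrite big_ord0 /=; ring.
rewrite big_ord_recr IH; case: (ltnP N k) => h.
  have -> : minn k N.+1 = N.+1 by lia.
  have -> : (N.+1 - k = 0)%N by lia.
  have -> : (N - k = 0)%N by lia.
  by rewrite /=; ring.
have -> : minn k N.+1 = k by lia.
have -> : (N.+1 - k = (N - k).+1)%N by lia.
by rewrite /=; ring.
Qed.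

Lemma prod_delta N (i : 'I_N) (a : R) :
  \big[Rmult/1]_(t < N) (if t == i then a else 1) = a.
Proof. by rewrite -big_mkcond big_pred1_eq. Qed.

Lemma detR_det N (M : 'I_N -> 'I_N -> R) : detR M = (\det (\matrix_(i, j) M i j))%R.
Proof.
rewrite /detR /determinant; apply: eq_bigr => p _.
under [in RHS]eq_bigr do rewrite mxE.
apply: (f_equal2 Rmult) => //.
by case: (odd_perm p) => /=; rewrite ?Rmult_1_r.
Qed.

Lemma sumR_ext N (F G : 'I_N -> R) : (forall i, F i = G i) -> sumR F = sumR G.
Proof. by move=> H; apply: eq_bigr => i _. Qed.

Lemma sumR_le N (F G : 'I_N -> R) : (forall i, F i <= G i) -> sumR F <= sumR G.
Proof. by move=> H; apply: big_ind2 => // *; lra. Qed.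

Lemma sumR_mull N a (F : 'I_N -> R) : sumR (fun i => a * F i) = a * sumR F.
Proof. exact: sum_mull. Qed.

Lemma sumRD N (F G : 'I_N -> R) : sumR (fun i => F i + G i) = sumR F + sumR G.
Proof. by rewrite /sumR big_split. Qed.

Lemma sumR_delta N (i : 'I_N) (f : 'I_N -> R) :
  sumR (fun t => if t == i then f t else 0) = f i.
Proof. by rewrite /sumR -big_mkcond big_pred1_eq. Qed.

Lemma sumR_if_lt (N k : nat) (a b : R) :
  sumR (fun i : 'I_N => if (i < k)%N then a else b) = INR (minn k N) * a + INR (N - k) * b.
Proof.
rewrite /sumR; elim: N => [|N IH]; first by rewrite big_ord0 /=; ring.
rewrite big_ord_recr IH; case: (ltnP N k) => h.
  have -> : minn k N.+1 = N.+1 by lia.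
  have -> : (N.+1 - k = 0)%N by lia.
  have -> : (N - k = 0)%N by lia.
  by rewrite S_INR /=; ring.
have -> : minn k N.+1 = k by lia.
have -> : (N.+1 - k = (N - k).+1)%N by lia.
by rewrite S_INR /=; ring.
Qed.

Lemma sumR_if_lt_le N k (F : 'I_N -> R) c : (k <= N)%N ->
  (forall i : 'I_N, (i < k)%N -> F i <= c) ->
  sumR (fun i : 'I_N => if (i < k)%N then F i else 0) <= INR k * c.
Proof.
move=> k_le_N F_le.
apply: Rle_trans (sumR_le (G := fun i : 'I_N => if (i < k)%N then c else 0) _) _.
  by move=> i; case: ifP => hi; [exact: F_le | lra].
by rewrite sumR_if_lt (_ : minn k N = k); [lra | lia].
Qed.

Lemma sumR_update N (F G : 'I_N -> R) (m : 'I_N) :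
  (forall i, i != m -> G i = F i) -> sumR G = sumR F - F m + G m.
Proof.
move=> H; rewrite /sumR (bigD1 m) //= [in RHS](bigD1 m) //=.
by rewrite (eq_bigr F) => [|i /H //]; ring.
Qed.

Lemma sumR_ge_term N (F : 'I_N -> R) (m : 'I_N) : (forall i, 0 <= F i) -> F m <= sumR F.
Proof.
move=> H; rewrite /sumR (bigD1 m) //=.
rewrite -{1}(Rplus_0_r (F m)); apply: Rplus_le_compat_l.
by apply: sum_ge0.
Qed.

Lemma In_map (A B : Type) (f : A -> B) (s : seq A) y :
  List.In y [seq f x | x <- s] -> exists x, y = f x.
Proof. by elim: s => [//|x s IH] /= [<- | /IH //]; exists x. Qed.

Lemma In_cat (A : Type) (s1 s2 : seq A) y :
  List.In y (s1 ++ s2) -> List.In y s1 \/ List.In y s2.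
Proof. by elim: s1 => [|x s IH] /=; [right | case=> [<- | /IH]; [left; left | tauto]]. Qed.

Definition unit_vec N (i : 'I_N) : vec N := fun t => if t == i then 1 else 0.

Lemma is_int_unit_vec N (i t : 'I_N) : is_int (unit_vec i t).
Proof. by rewrite /unit_vec; case: ifP => _; [exact: is_int1 | exact: is_int0]. Qed.

Lemma unit_vec_sq N (i t : 'I_N) : unit_vec i t * unit_vec i t = unit_vec i t.
Proof. by rewrite /unit_vec; case: ifP => _; ring. Qed.

Lemma unit_vec_orth N (i j t : 'I_N) : i != j -> unit_vec i t * unit_vec j t = 0.
Proof.
move=> hij; rewrite /unit_vec; case: (boolP (t == i)) => [/eqP ->|_]; last ring.
by rewrite (negbTE hij); ring.
Qed.

Lemma sumR_mul_unit_vec N (f : vec N) (i : 'I_N) : sumR (fun t => f t * unit_vec i t) = f i.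
Proof.
rewrite -(sumR_delta i f); apply: sumR_ext => t.
by rewrite /unit_vec; case: ifP => _; ring.
Qed.

Definition coord_scale (k i : nat) : R := if (i < k)%N then / sqrt 2 else 1.

Lemma coord_scale_sq k i : coord_scale k i * coord_scale k i = if (i < k)%N then / 2 else 1.
Proof.
rewrite /coord_scale; case: ifP => _; last ring.
by rewrite -Rinv_mult sqrt_sqrt //; lra.
Qed.

Lemma coord_scale_gt0 k i : 0 < coord_scale k i.
Proof.
rewrite /coord_scale; case: ifP => _; last lra.
by apply/Rinv_0_lt_compat/sqrt_lt_R0; lra.
Qed.

(* The basis vectors (rows) are s/sqrt 2 times 2 e_0 and e_j - e_0 (0 < j < k),
   a basis of s D_k / sqrt 2, followed by s e_j (k <= j), a basis of s Z^(N-k). *)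
Definition DZ_basis (N k : nat) (s : R) : 'I_N -> vec N := fun j i =>
  s * coord_scale k i *
  (if (j : nat) == 0%N then (if (i : nat) == 0%N then 2 else 0)
   else if i == j then 1 else if ((i : nat) == 0%N) && (j < k)%N then -1 else 0).
Arguments DZ_basis : clear implicits.

Definition in_DkZ N (k : nat) (W : vec N) : Prop :=
  (forall i, is_int (W i)) /\ is_even (sumR (fun i : 'I_N => if (i < k)%N then W i else 0)).

Definition DZ_point N (k : nat) (s : R) (v : vec N) : Prop :=
  exists W, in_DkZ k W /\ forall i, v i = s * coord_scale k i * W i.

Definition DZ_cover2 (N k : nat) (s : R) : R := s * s * (INR k / 8 + INR (N - k) / 4).

Definition deep_hole (N k : nat) (s : R) : vec N := fun t => s * coord_scale k t / 2.
Arguments deep_hole : clear implicits.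

Section DZLattice.

Variables (n k : nat) (s : R).
Local Notation N := n.+1.
Local Notation B := (DZ_basis N k s).

Lemma sumR_if_lt_ord0 (F : 'I_N -> R) : (0 < k)%N ->
  sumR (fun i : 'I_N => if (i < k)%N then F i else 0) =
  F ord0 + sumR (fun i : 'I_N => if (0 < i < k)%N then F i else 0).
Proof.
move=> k_gt0; rewrite /sumR (bigD1 ord0) //= [X in _ = _ + X](bigD1 ord0) //= k_gt0.
rewrite Rplus_0_l; congr (_ + _); apply: eq_bigr => i hi.
by have -> : (0 < i)%N by case: i hi => [[|i] ?].
Qed.

Lemma DZ_lattice_pt_coord (z : 'I_N -> Z) (i : 'I_N) : (i : nat) <> 0%N ->
  lattice_pt B z i = s * coord_scale k i * IZR (z i).
Proof.
move=> hi; have hi0 : ((i : nat) == 0%N) = false by apply/eqP.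
rewrite /lattice_pt /sumR (bigD1 i) //= big1 => [|j hj].
  by rewrite /DZ_basis hi0 eqxx; ring.
have hij : (i == j) = false by rewrite eq_sym; exact: negbTE.
by rewrite /DZ_basis hij hi0 /=; case: ifP => _; ring.
Qed.

Lemma DZ_lattice_pt_coord0 (z : 'I_N -> Z) :
  lattice_pt B z ord0 = s * coord_scale k 0%N *
    (2 * IZR (z ord0) - sumR (fun j : 'I_N => if (0 < j < k)%N then IZR (z j) else 0)).
Proof.
rewrite /lattice_pt /sumR (bigD1 ord0) //= [X in _ = _ * (_ - X)](bigD1 ord0) //=.
rewrite (eq_bigr (fun j : 'I_N =>
    - (s * coord_scale k 0%N) * (if (0 < j < k)%N then IZR (z j) else 0))) => [|j hj].
  by rewrite sum_mull /DZ_basis /=; ring.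
have hj0 : (0 < j)%N by case: j hj => [[|j] ?].
have e1 : (ord0 == j) = false by rewrite eq_sym; exact: negbTE.
have e2 : ((j : nat) == 0%N) = false by apply: negbTE; rewrite -lt0n.
by rewrite /DZ_basis e1 e2 hj0 /=; case: ifP => _; ring.
Qed.

Lemma in_DZ_latticeP (v : vec N) : (0 < k)%N -> in_lattice B v <-> DZ_point k s v.
Proof.
move=> k_gt0; split.
  case=> z Hz.
  set T := sumR (fun j : 'I_N => if (0 < j < k)%N then IZR (z j) else 0).
  have sumT : sumR (fun i : 'I_N => if (0 < i < k)%N then
      (if i == ord0 then 2 * IZR (z ord0) - T else IZR (z i)) else 0) = T.
    apply: sumR_ext => i; case: ifP => // /andP [i_gt0 _].
    by have -> : (i == ord0) = false by apply/negP => /eqP E; rewrite E in i_gt0.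
  exists (fun i : 'I_N => if i == ord0 then 2 * IZR (z ord0) - T else IZR (z i)).
  split; [split|].
  - move=> i; case: ifP => _; last by exists (z i).
    apply: is_intD; first by apply: is_intM; [exists 2%Z | exists (z ord0)].
    apply/is_intN/is_int_sum => j _; case: ifP => _; [by exists (z j) | exact: is_int0].
  - exists (IZR (z ord0)); split; first by exists (z ord0).
    by rewrite sumR_if_lt_ord0 // eqxx sumT; ring.
  - move=> i; rewrite Hz; case: ifP => [/eqP -> | hi]; first exact: DZ_lattice_pt_coord0.
    by apply: DZ_lattice_pt_coord => E; move/negP: hi; apply; apply/eqP/val_inj.
case=> W [[W_int [m [m_int sumW]]] Hv].
exists (fun i : 'I_N => if i == ord0 then Z_of_int m else Z_of_int (W i)) => i.
rewrite Hv; case: (boolP (i == ord0)) => [/eqP -> | hi].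
  rewrite DZ_lattice_pt_coord0 /= Z_of_intK //.
  have -> : sumR (fun j : 'I_N => if (0 < j < k)%N then
      IZR (if j == ord0 then Z_of_int m else Z_of_int (W j)) else 0) =
      sumR (fun j : 'I_N => if (0 < j < k)%N then W j else 0).
    apply: sumR_ext => j; case: ifP => // /andP [j_gt0 _].
    have -> : (j == ord0) = false by apply/negP => /eqP E; rewrite E in j_gt0.
    by rewrite Z_of_intK.
  move: sumW; rewrite sumR_if_lt_ord0 // => sumW; congr (_ * _); lra.
rewrite DZ_lattice_pt_coord ?(negbTE hi) ?Z_of_intK //.
by move=> E; move/negP: hi; apply; apply/eqP/val_inj.
Qed.

(* |v|^2 / s^2 is the integer sum_{i<k} (W_i / 2 + W_i (W_i - 1) / 2) + sum_{i>=k} W_i^2,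
   the sum of the W_i / 2 being half the even coordinate sum. *)
Lemma DZ_point_norm2_ge (v : vec N) : 0 < s ->
  DZ_point k s v -> Defs.nonzero v -> s * s <= dotR v v.
Proof.
move=> s_gt0 [W [[W_int [m [m_int sumW]]] Hv]] [i hi].
set Q := sumR (fun t : 'I_N => if (t < k)%N then W t * W t / 2 else W t * W t).
have dotE : dotR v v = s * s * Q.
  rewrite /dotR -sumR_mull; apply: sumR_ext => t; rewrite Hv.
  transitivity (s * s * (coord_scale k t * coord_scale k t) * (W t * W t)); first ring.
  by rewrite coord_scale_sq; case: ifP => _; field.
have Q_int : is_int Q.
  have -> : Q = / 2 * sumR (fun t : 'I_N => if (t < k)%N then W t else 0) +
      sumR (fun t : 'I_N => if (t < k)%N then W t * (W t - 1) / 2 else W t * W t).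
    rewrite -sumR_mull -sumRD; apply: sumR_ext => t; case: ifP => _; field.
  rewrite sumW (_ : / 2 * (2 * m) = m); last field.
  apply: is_intD => //; apply: is_int_sum => t _; case: ifP => _.
    exact: is_int_mul_pred_half.
  exact: is_intM.
have Wi_neq0 : W i <> 0 by move=> h; apply: hi; rewrite Hv h; ring.
have Q_gt0 : 0 < Q.
  have Wi2 := Rsqr_pos_lt _ Wi_neq0; rewrite /Rsqr in Wi2.
  apply: Rlt_le_trans (sumR_ge_term i _) => [|t]; first by case: ifP => _; lra.
  by case: ifP => _; nra.
have := is_int_ge1 Q_int Q_gt0; rewrite dotE; nra.
Qed.

Lemma DZ_lattice_norm_ge (w : vec N) : 0 < s -> (0 < k)%N ->
  in_lattice B w -> Defs.nonzero w -> s <= normR w.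
Proof.
move=> s_gt0 k_gt0 /(in_DZ_latticeP _ k_gt0) hw hnz.
rewrite /normR -(sqrt_square s); last lra.
exact/sqrt_le_1_alt/DZ_point_norm2_ge.
Qed.

Definition partner (i : 'I_N) : 'I_N := if i == ord0 then inord 1 else ord0.

Definition sign (b : bool) : R := if b then 1 else -1.

Definition min_coords (b : bool) (i : 'I_N) : vec N := fun t =>
  if (i < k)%N then unit_vec i t + sign b * unit_vec (partner i) t else unit_vec i t.

Definition min_vec (b : bool) (i : 'I_N) : vec N :=
  fun t => s * coord_scale k t * min_coords b i t.

Lemma partner_neq i : (0 < n)%N -> partner i != i.
Proof.
move=> n_gt0; rewrite /partner; case: ifP => [/eqP -> | h]; last by rewrite eq_sym h.
by apply/negP => /eqP/(f_equal val); rewrite /= inordK //; lia.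
Qed.

Lemma partner_lt2 i : (0 < n)%N -> (partner i < 2)%N.
Proof. by move=> n_gt0; rewrite /partner; case: ifP => _ //=; rewrite inordK //; lia. Qed.

Lemma min_coords_in_DkZ b i : (0 < n)%N -> (2 <= k)%N -> in_DkZ k (min_coords b i).
Proof.
move=> n_gt0 k_ge2; split.
  move=> t; rewrite /min_coords; case: ifP => _; last exact: is_int_unit_vec.
  apply: is_intD (is_int_unit_vec _ _) (is_intM _ (is_int_unit_vec _ _)).
  by case: b; [exact: is_int1 | exact: is_intN1].
set ind := fun t : 'I_N => if (t < k)%N then 1 else 0.
have -> : sumR (fun t => if (t < k)%N then min_coords b i t else 0) =
    sumR (fun t => ind t * min_coords b i t).
  by apply: sumR_ext => t; rewrite /ind; case: ifP => _; ring.
case: (boolP (i < k)%N) => hi; last first.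
  rewrite (sumR_ext (G := fun t => ind t * unit_vec i t)) => [|t]; last first.
    by rewrite /min_coords (negbTE hi).
  by rewrite sumR_mul_unit_vec /ind (negbTE hi); exists 0; split; [exact: is_int0 | ring].
have hp : (partner i < k)%N := leq_trans (partner_lt2 i n_gt0) k_ge2.
rewrite (sumR_ext (G := fun t => ind t * unit_vec i t +
    sign b * (ind t * unit_vec (partner i) t))) => [|t]; last by rewrite /min_coords hi; ring.
rewrite sumRD sumR_mull !sumR_mul_unit_vec /ind hi hp /sign.
by case: b; [exists 1; split; [exact: is_int1 | ring] | exists 0; split; [exact: is_int0 | ring]].
Qed.

Lemma min_vec_norm2 b i : (0 < n)%N -> (2 <= k)%N ->
  dotR (min_vec b i) (min_vec b i) = s * s.
Proof.
move=> n_gt0 k_ge2; set f := fun t : 'I_N => coord_scale k t * coord_scale k t.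
have -> : dotR (min_vec b i) (min_vec b i) =
    s * s * sumR (fun t => f t * (min_coords b i t * min_coords b i t)).
  by rewrite /dotR -sumR_mull; apply: sumR_ext => t; rewrite /min_vec /f; ring.
case: (boolP (i < k)%N) => hi; last first.
  rewrite (sumR_ext (G := fun t => f t * unit_vec i t)) => [|t].
    by rewrite sumR_mul_unit_vec /f coord_scale_sq (negbTE hi); ring.
  by rewrite /min_coords (negbTE hi) unit_vec_sq.
have hp : (partner i < k)%N := leq_trans (partner_lt2 i n_gt0) k_ge2.
rewrite (sumR_ext (G := fun t => f t * unit_vec i t + f t * unit_vec (partner i) t)) => [|t].
  by rewrite sumRD !sumR_mul_unit_vec /f !coord_scale_sq hi hp; field.
have orth : unit_vec i t * unit_vec (partner i) t = 0.
  by apply: unit_vec_orth; rewrite eq_sym partner_neq.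
have sign_sq : sign b * sign b = 1 by rewrite /sign; case: b; ring.
rewrite /min_coords hi.
transitivity (f t * (unit_vec i t * unit_vec i t +
  2 * sign b * (unit_vec i t * unit_vec (partner i) t) +
  sign b * sign b * (unit_vec (partner i) t * unit_vec (partner i) t))); first ring.
by rewrite orth sign_sq !unit_vec_sq; ring.
Qed.

Lemma min_vec_nonzero b i : 0 < s -> (0 < n)%N -> Defs.nonzero (min_vec b i).
Proof.
move=> s_gt0 n_gt0; exists i; rewrite /min_vec /min_coords /unit_vec eqxx.
have -> : (i == partner i) = false by apply: negbTE; rewrite eq_sym partner_neq.
by have := coord_scale_gt0 k i; case: ifP => _ h; nra.
Qed.

Lemma min_vec_shortest b i : 0 < s -> (0 < n)%N -> (2 <= k)%N ->
  shortest_vector B (min_vec b i).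
Proof.
move=> s_gt0 n_gt0 k_ge2; have k_gt0 : (0 < k)%N by lia.
split; first by apply/(in_DZ_latticeP _ k_gt0); exists (min_coords b i);
  split; [exact: min_coords_in_DkZ |].
split; first exact: min_vec_nonzero.
move=> w hw hnz; rewrite /normR min_vec_norm2 // sqrt_square; last lra.
exact: DZ_lattice_norm_ge.
Qed.

Lemma min_vec_pair_sum i t :
  min_vec true i t + min_vec false i t = 2 * s * coord_scale k t * unit_vec i t.
Proof. by rewrite /min_vec /min_coords /sign; case: ifP => _; ring. Qed.

Lemma DZ_well_rounded : 0 < s -> (0 < n)%N -> (2 <= k)%N -> well_rounded B.
Proof.
move=> s_gt0 n_gt0 k_ge2 x.
set a := fun i : 'I_N => x i / (2 * s * coord_scale k i).
exists ([seq (a i, min_vec true i) | i <- index_enum 'I_N] ++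
        [seq (a i, min_vec false i) | i <- index_enum 'I_N]).
split=> [p p_in | t].
  by have [p_in' | p_in'] := In_cat p_in; have [i ->] := In_map p_in'; exact: min_vec_shortest.
rewrite big_cat !big_map.
change (x t = sumR (fun i => a i * min_vec true i t) + sumR (fun i => a i * min_vec false i t)).
rewrite -sumRD -[LHS](sumR_delta t x); apply: sumR_ext => i.
rewrite -Rmult_plus_distr_l min_vec_pair_sum /unit_vec /a.
case: (eqVneq i t) => [-> | _]; last ring.
have scale_neq0 : 2 * s * coord_scale k t <> 0 by have := coord_scale_gt0 k t; nra.
by rewrite ?eqxx Rmult_1_r /Rdiv Rmult_assoc Rinv_l // Rmult_1_r.
Qed.

Lemma deep_hole_dist2_ge (v : vec N) : (k <= N)%N -> DZ_point k s v ->
  DZ_cover2 N k s <= dotR (subv (deep_hole N k s) v) (subv (deep_hole N k s) v).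
Proof.
move=> k_le_N [W [[W_int _] Hv]].
have -> : dotR (subv (deep_hole N k s) v) (subv (deep_hole N k s) v) =
    s * s * sumR (fun t => coord_scale k t * coord_scale k t * ((/ 2 - W t) * (/ 2 - W t))).
  by rewrite /dotR -sumR_mull; apply: sumR_ext => t; rewrite /subv /deep_hole Hv; field.
rewrite /DZ_cover2; apply: Rmult_le_compat_l; first nra.
have -> : INR k / 8 + INR (N - k) / 4 = sumR (fun t : 'I_N => if (t < k)%N then / 8 else / 4).
  by rewrite sumR_if_lt (_ : minn k N = k); [field | lia].
apply: sumR_le => t; rewrite coord_scale_sq.
by have := is_int_mul_pred_ge0 (W_int t); case: ifP => _; nra.
Qed.

(* Decoding D_k x Z^(N-k): round every coordinate and, if the first k rounded
   coordinates have odd sum, re-round the worst of them the other way. *)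
Lemma Dk_decode (y : vec N) : (4 <= k)%N -> (k <= N)%N ->
  exists W, in_DkZ k W /\
    sumR (fun i : 'I_N => if (i < k)%N then (y i - W i) * (y i - W i) else 0) <= INR k / 4 /\
    forall i : 'I_N, (k <= i)%N -> (y i - W i) * (y i - W i) <= / 4.
Proof.
move=> k_ge4 k_le_N; set W0 := fun i : 'I_N => round_int (y i).
have err0 i : (y i - W0 i) * (y i - W0 i) <= / 4.
  by have := round_int_err (y i); rewrite /W0; nra.
have sum0_int : is_int (sumR (fun i : 'I_N => if (i < k)%N then W0 i else 0)).
  by apply: is_int_sum => i _; case: ifP => _; [exact: is_int_round | exact: is_int0].
case: (is_int_parity sum0_int) => [sum0_even | [sum0_succ sum0_pred]].
  exists W0; split; first by split=> // i; exact: is_int_round.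
  split=> //; apply: Rle_trans (sumR_if_lt_le k_le_N (fun i _ => err0 i)) _; lra.
have k_gt0 : (0 < k)%N by lia.
case: (@arg_maxP _ R _ ord0 (fun i : 'I_N => (i < k)%N)
  (fun i => (y i - W0 i) * (y i - W0 i)) k_gt0) => m m_lt_k m_max.
have [d [d_pm1 flipE]] := round_int_flip (y m).
set W := fun i : 'I_N => if i == m then W0 m + d else W0 i.
have updE (g : 'I_N -> R -> R) :
    sumR (fun i => if (i < k)%N then g i (W i) else 0) =
    sumR (fun i => if (i < k)%N then g i (W0 i) else 0) - g m (W0 m) + g m (W0 m + d).
  rewrite (sumR_update (m := m) (F := fun i => if (i < k)%N then g i (W0 i) else 0)).
    by rewrite /= m_lt_k /W eqxx.
  by move=> i hi; rewrite /W (negbTE hi).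
exists W; split; [split | split].
- move=> i; rewrite /W; case: ifP => _; last exact: is_int_round.
  by apply: is_intD; [exact: is_int_round | case: d_pm1 => ->; [exact: is_int1 | exact: is_intN1]].
- rewrite (updE (fun _ w => w)) (_ : forall S, S - W0 m + (W0 m + d) = S + d); last by move=> S; ring.
  by case: d_pm1 => ->; [exact: sum0_succ | exact: sum0_pred].
- rewrite (updE (fun i w => (y i - w) * (y i - w))) flipE.
  set e := y m - round_int (y m).
  have e_le : Rabs e <= / 2 by have := round_int_err (y m); rewrite -/e => he; apply: Rabs_le; lra.
  have sum0_le : sumR (fun i : 'I_N => if (i < k)%N then (y i - W0 i) * (y i - W0 i) else 0)
      <= INR k * (Rabs e * Rabs e).
    rewrite -Rabs_mult Rabs_pos_eq; last nra.
    by apply: sumR_if_lt_le => // i hi; move/RleP: (m_max i hi).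
  have := flip_err_le k_ge4 (conj (Rabs_pos e) e_le) sum0_le.
  rewrite -/W0 /=; lra.
- move=> i hi; rewrite /W.
  have -> : (i == m) = false by apply/negP => /eqP E; move: m_lt_k; rewrite -E; lia.
  exact: err0.
Qed.

Lemma DZ_point_near (x : vec N) : 0 < s -> (4 <= k)%N -> (k <= N)%N ->
  exists v, DZ_point k s v /\ dotR (subv x v) (subv x v) <= DZ_cover2 N k s.
Proof.
move=> s_gt0 k_ge4 k_le_N.
set y := fun t : 'I_N => x t / (s * coord_scale k t).
have [W [W_DkZ [err_lt err_ge]]] := Dk_decode y k_ge4 k_le_N.
set v := fun t : 'I_N => s * coord_scale k t * W t.
exists v; split; first by exists W.
set Y := fun t : 'I_N => (y t - W t) * (y t - W t).
have -> : dotR (subv x v) (subv x v) = s * s *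
    (/ 2 * sumR (fun t => if (t < k)%N then Y t else 0) +
     sumR (fun t => if (t < k)%N then 0 else Y t)).
  rewrite -sumR_mull -sumRD -sumR_mull /dotR; apply: sumR_ext => t.
  transitivity (s * s * (coord_scale k t * coord_scale k t) * Y t).
    by rewrite /subv /v /Y /y; have := coord_scale_gt0 k t => c_gt0; field; lra.
  by rewrite coord_scale_sq; case: ifP => _; ring.
rewrite /DZ_cover2; apply: Rmult_le_compat_l; first nra.
have : sumR (fun t => if (t < k)%N then 0 else Y t) <= INR (N - k) / 4.
  apply: Rle_trans (sumR_le (G := fun t : 'I_N => if (t < k)%N then 0 else / 4) _) _.
    by move=> t; case: ltnP => ht; [lra | exact: err_ge].
  by rewrite sumR_if_lt; lra.
rewrite /Y; lra.
Qed.

Lemma DZ_covering_radius : 0 < s -> (4 <= k)%N -> (k <= N)%N ->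
  is_covering_radius B (sqrt (DZ_cover2 N k s)).
Proof.
move=> s_gt0 k_ge4 k_le_N; have k_gt0 : (0 < k)%N by lia.
split; first exact: sqrt_pos.
split.
  move=> x; have [v [hv dist_le]] := DZ_point_near x s_gt0 k_ge4 k_le_N.
  by exists v; split; [apply/(in_DZ_latticeP _ k_gt0) | exact: sqrt_le_1_alt].
move=> r r_ge0 /(_ (deep_hole N k s)) [v [/(in_DZ_latticeP _ k_gt0) hv dist_le]].
by apply: Rle_trans dist_le; apply/sqrt_le_1_alt/deep_hole_dist2_ge.
Qed.

Lemma detR_DZ_basis : (0 < k)%N -> (k <= N)%N -> detR B = s ^ N * (/ sqrt 2) ^ k * 2.
Proof.
move=> k_gt0 k_le_N; rewrite detR_det det_trig.
  transitivity (\big[Rmult/1]_(i < N)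
      (s * ((if (i < k)%N then / sqrt 2 else 1) * (if i == ord0 then 2 else 1)))).
    apply: eq_bigr => i _; rewrite mxE /DZ_basis eqxx /coord_scale.
    case: (boolP (i == ord0)) => [/eqP -> | hi] /=; first by rewrite k_gt0; ring.
    have -> : ((i : nat) == 0%N) = false.
      by apply/negP => /eqP E; move/negP: hi; apply; apply/eqP/val_inj.
    by case: ifP => _; ring.
  rewrite big_split big_split /= prod_const prod_if_lt prod_delta.
  by rewrite (_ : minn k N = k) ?(pow1 (N - k)) /=; [ring | lia].
apply/is_trig_mxP => i j hij; rewrite mxE /DZ_basis.
have -> : (j == i) = false by apply/eqP => E; rewrite E ltnn in hij.
have -> : ((j : nat) == 0%N) = false by apply/eqP; lia.
by case: ifP => _; apply: Rmult_0_r.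
Qed.

End DZLattice.

Lemma DZ_unimodular n q s : (0 < q)%N -> (2 * q <= n.+1)%N -> s ^ n.+1 = 2 ^ (q - 1) ->
  unimodular (DZ_basis n.+1 (2 * q) s).
Proof.
move=> q_gt0 hqN sN; rewrite /unimodular /covolume detR_DZ_basis ?sN //; last lia.
rewrite (_ : (2 * q)%N = Nat.mul 2 q) // pow_mult.
have -> : (/ sqrt 2) ^ 2 = / 2 by rewrite /= Rmult_1_r -Rinv_mult sqrt_sqrt //; lra.
case: q q_gt0 {hqN sN} => [//|p] _; rewrite subn1 /=.
have inv_pow : 2 ^ p * (/ 2) ^ p = 1 by rewrite -Rpow_mult_distr Rinv_r ?pow1 //; lra.
by rewrite (_ : 2 ^ p * (/ 2 * (/ 2) ^ p) * 2 = 2 ^ p * (/ 2) ^ p); [rewrite inv_pow Rabs_R1 | field].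
Qed.

Lemma Rpower_div_pow (a x : R) (N : nat) : 0 < a -> (0 < N)%N ->
  Rpower a (x / INR N) ^ N = Rpower a x.
Proof.
move=> a_gt0 N_gt0; rewrite -Rpower_pow; last exact: exp_pos.
rewrite Rpower_mult; congr Rpower; field; apply: not_0_INR; lia.
Qed.

Lemma pow64_lt_pow81 m : 256 * 64 ^ (10 + m) < 27 * 81 ^ (10 + m).
Proof.
elim: m => [|m IH].
  by rewrite addn0 !pow_IZR -!mult_IZR; apply: IZR_lt; apply/Z.ltb_lt; vm_compute.
have powS x : x ^ (10 + m).+1 = x * x ^ (10 + m) by [].
rewrite addnS !powS.
have : 0 < 64 ^ (10 + m) by apply: pow_lt; lra.
have : 0 < 81 ^ (10 + m) by apply: pow_lt; lra.
lra.
Qed.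

Lemma pow4_le_pow3 r : (r <= 3)%N -> 27 * 4 ^ (r + 1) <= 256 * 3 ^ r.
Proof. by case: r => [|[|[|[|r]]]] //= _; lra. Qed.

Lemma pow4_lt_pow3 q r : (10 <= q)%N -> (r <= 3)%N -> 4 ^ (3 * q + (r + 1)) < 3 ^ (4 * q + r).
Proof.
move=> q_ge10 r_le3; rewrite (pow_add 4 (3 * q)) (pow_add 3 (4 * q)).
rewrite (_ : (3 * q)%N = Nat.mul 3 q) // (_ : (4 * q)%N = Nat.mul 4 q) // !pow_mult.
rewrite (_ : 4 ^ 3 = 64); last ring. rewrite (_ : 3 ^ 4 = 81); last ring.
have [m ->] : exists m, q = (10 + m)%N by exists (q - 10)%N; lia.
have := pow64_lt_pow81 m; have := pow4_le_pow3 r_le3.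
have : 0 < 64 ^ (10 + m) by apply: pow_lt; lra.
have : 0 < 3 ^ r by apply: pow_lt; lra.
have : 0 < 4 ^ (r + 1) by apply: pow_lt; lra.
nra.
Qed.

Definition quarter_ineqb (N : nat) : bool :=
  let q := (N %/ 4)%N in
  Z.ltb (Z.of_nat N ^ Z.of_nat N)
    (2 ^ Z.of_nat (q - 1) * 2 ^ Z.of_nat (q - 1) * Z.of_nat (N - q) ^ Z.of_nat N).

(* Checked by computation up to N = 41; beyond, (N / (N - q))^N <= (4/3)^N < 4^(q-1)
   where q = N/4. *)
Lemma quarter_ineq N : (30 <= N)%N ->
  INR N ^ N < 2 ^ (N %/ 4 - 1) * 2 ^ (N %/ 4 - 1) * INR (N - N %/ 4) ^ N.
Proof.
move=> N_ge30; case: (leqP N 41) => N_le41.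
  have : all quarter_ineqb (iota 30 12) by vm_compute.
  move/allP/(_ N); rewrite mem_iota /quarter_ineqb => /(_ ltac:(lia)) /Z.ltb_lt h.
  by rewrite !INR_IZR_INZ !pow_IZR -!mult_IZR; exact: IZR_lt.
set q := (N %/ 4)%N; set r := (N %% 4)%N.
have q_ge10 : (10 <= q)%N by rewrite /q; lia.
have r_le3 : (r <= 3)%N by rewrite /r; lia.
have Nqr : N = (4 * q + r)%N by rewrite /q /r; lia.
have NqE : INR (N - q) = INR N - INR q by apply: minus_INR; lia.
have q4_le : 4 * INR q <= INR N by have := le_INR (4 * q) N ltac:(lia); rewrite mult_INR /=; lra.
have N_gt0 : 0 < INR N by apply: lt_0_INR; lia.
have base_le : (3 * INR N) ^ N <= (4 * INR (N - q)) ^ N.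
  by apply: pow_incr; rewrite NqE; lra.
rewrite (Rpow_mult_distr 3) (Rpow_mult_distr 4) in base_le.
have pow4N_lt : 4 ^ N < 3 ^ N * (2 ^ (q - 1) * 2 ^ (q - 1)).
  rewrite -Rpow_mult_distr (_ : 2 * 2 = 4); last ring.
  rewrite {1}(_ : N = ((q - 1) + (3 * q + (r + 1)))%N); last lia.
  rewrite pow_add {1}Nqr.
  have := pow4_lt_pow3 q_ge10 r_le3; have : 0 < 4 ^ (q - 1) by apply: pow_lt; lra.
  nra.
have pow3_gt0 : 0 < 3 ^ N by apply: pow_lt; lra.
have NqN_gt0 : 0 < INR (N - q) ^ N by apply/pow_lt/lt_0_INR; lia.
apply: (Rmult_lt_reg_l (3 ^ N)) => //.
have := Rmult_lt_compat_r _ _ _ NqN_gt0 pow4N_lt; lra.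
Qed.

Lemma sqrt_lt_DZ_cover2 N s : (30 <= N)%N -> 0 < s -> s ^ N = 2 ^ (N %/ 4 - 1) ->
  sqrt (INR N) / 2 < sqrt (DZ_cover2 N (2 * (N %/ 4)) s).
Proof.
move=> N_ge30 s_gt0 sN; set q := (N %/ 4)%N in sN *.
have q_le : (2 * q <= N)%N by rewrite /q; lia.
have cover2E : DZ_cover2 N (2 * q) s = s * s * INR (N - q) / 4.
  have NqE : INR (N - q) = INR N - INR q by apply: minus_INR; lia.
  have NkE : INR (N - 2 * q) = INR N - INR (2 * q) by apply: minus_INR; lia.
  by rewrite /DZ_cover2 NkE NqE mult_INR /=; field.
have cover_ge0 : 0 <= s * s * INR (N - q).
  by apply: Rmult_le_pos; [apply: Rmult_le_pos; lra | exact: pos_INR].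
have key : INR N < s * s * INR (N - q).
  apply: Rnot_le_lt => Hle; have := quarter_ineq N_ge30; rewrite -/q.
  have := pow_incr _ _ N (conj cover_ge0 Hle).
  by rewrite 2!Rpow_mult_distr sN; lra.
have sqrt4 : sqrt 4 = 2.
  by rewrite -(sqrt_square 2); [congr sqrt; ring | lra].
have -> : sqrt (INR N) / 2 = sqrt (INR N / 4) by rewrite sqrt_div_alt ?sqrt4 //; lra.
apply: sqrt_lt_1_alt; rewrite cover2E; split; last lra.
by apply: Rmult_le_pos; [exact: pos_INR | lra].
Qed.

Theorem mainTheorem2 (d : nat) (hd : (30 <= d)%nat) :
  exists (B : 'I_d -> vec d) (r : R),
    well_rounded B /\ unimodular B /\ is_covering_radius B r /\
    (sqrt (INR d) / 2 < r)%R.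
Proof.
case: d hd => [//|n] hd.
set q := (n.+1 %/ 4)%N; set k := (2 * q)%N.
have k_ge4 : (4 <= k)%N by rewrite /k /q; lia.
have k_le_N : (k <= n.+1)%N by rewrite /k /q; lia.
set s := Rpower 2 (INR (q - 1) / INR n.+1).
have s_gt0 : 0 < s by exact: exp_pos.
have sN : s ^ n.+1 = 2 ^ (q - 1) by rewrite Rpower_div_pow ?Rpower_pow //; lra.
exists (DZ_basis n.+1 k s), (sqrt (DZ_cover2 n.+1 k s)); split; [|split; [|split]].
- by apply: DZ_well_rounded => //; lia.
- by apply: DZ_unimodular => //; rewrite /q; lia.
- exact: DZ_covering_radius.
- exact: sqrt_lt_DZ_cover2.
Qed.
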